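(* Let $c>0$ and let $F:\mathbb{S}^3(c/4)\to T^1\mathbb{S}^2(c)$ be the map defined in the context. Then $F$ is a covering map with $F(-y)=F(y)$, and: (1) For $m=\log_2 c$ and any $r\ge 0$, $F$ induces an isometry from the real projective space $\mathbb{R}\mathrm{P}^3(c/4)=\mathbb{S}^3(c/4)/\{\pm 1\}$, with the metric of constant curvature $c/4$ induced from $\mathbb{S}^3(c/4)$, onto $T^1\mathbb{S}^2(c)$ equipped with the Riemannian metric obtained by restricting the generalized Cheeger–Gromoll metric $h_{m,r}$ of $T\mathbb{S}^2(c)$. Equivalently, $F^*(h_{m,r}|_{T^1\mathbb{S}^2(c)})$ is the round metric of $\mathbb{S}^3(c/4)$. (2) Take $c=4$, so that $\mathbb{S}^3(c/4)=\mathbb{S}^3$ and $F:\mathbb{S}^3\to T^1\mathbb{S}^2(4)$. Let $\epsilon>0$ and let $g_\epsilon$ be the Berger metric on $\mathbb{S}^3$, i.e. the Riemannian metric for which $\{X_1,X_2,\epsilon X_3\}$ is an orthonormal frame. Then for $m=\log_2(\epsilon^2)+2$ and any $r\ge0$, $F$ induces an isometry from $(\mathbb{R}\mathrm{P}^3,g_\epsilon)$ (the quotient of $(\mathbb{S}^3,g_\epsilon)$ by $\pm1$) onto $(T^1\mathbb{S}^2(4),h_{m,r}|_{T^1\mathbb{S}^2(4)})$.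
   Context: For $c>0$, $\mathbb{S}^n(c)=\{x\in\mathbb{R}^{n+1}:|x|=1/\sqrt c\}$ with the metric induced from Euclidean $\mathbb{R}^{n+1}$ (constant curvature $c$); $\mathbb{S}^n=\mathbb{S}^n(1)$. For $x=(x^1,x^2,x^3,x^4)\in\mathbb{R}^4$ write $z_1=x^1+\sqrt{-1}x^2$, $z_2=x^3+\sqrt{-1}x^4$. On $\mathbb{S}^3$ define the orthonormal vector fields - $X_1(x)=(-x^4,-x^3,x^2,x^1)$, - $X_2(x)=(-x^3,x^4,x^1,-x^2)$, - $X_3(x)=(-x^2,x^1,-x^4,x^3)$. For $x\in\mathbb{S}^3$ let $A_x=\begin{pmatrix}z_1&-\bar z_2\\ z_2&\bar z_1\end{pmatrix}\in\mathrm{SU}(2)$. Let $e_1=\begin{pmatrix}0&\sqrt{-1}\\ \sqrt{-1}&0\end{pmatrix}$, $e_2=\begin{pmatrix}0&-1\\1&0\end{pmatrix}$, $e_3=\begin{pmatrix}\sqrt{-1}&0\\0&-\sqrt{-1}\end{pmatrix}$. These form an orthonormal basis of $\mathfrak{su}(2)$ for $\langle X,Y\rangle=-\tfrac12\mathrm{Tr}(XY)$. Identify $\mathfrak{su}(2)$ with $\mathbb{R}^3$ via coordinates in this basis. Then $\rho(A_x)\in\mathrm{SO}(3)$ is the matrix of $Y\mapsto A_xYA_x^{-1}$, whose columns are the coordinate vectors of $A_xe_jA_x^{-1}$: - $A_xe_1A_x^{-1}=(\mathrm{Re}(z_1^2-\bar z_2^2),\ \mathrm{Im}(z_1^2-\bar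 z_2^2),\ -2\mathrm{Re}(z_1z_2))$, - $A_xe_2A_x^{-1}=(\mathrm{Im}(\bar z_1^2+z_2^2),\ \mathrm{Re}(\bar z_1^2+z_2^2),\ 2\mathrm{Im}(z_1z_2))$, - $A_xe_3A_x^{-1}=(2\mathrm{Re}(z_1\bar z_2),\ 2\mathrm{Im}(z_1\bar z_2),\ |z_1|^2-|z_2|^2)$. The unit tangent bundle is $T^1\mathbb{S}^2(c)=\{(p,v)\in\mathbb{R}^3\times\mathbb{R}^3: |p|=1/\sqrt c,\ |v|=1,\ \langle p,v\rangle=0\}$, with projection $\pi(p,v)=p$. The map $F:\mathbb{S}^3(c/4)\to T^1\mathbb{S}^2(c)$ is $$F(2x/\sqrt c)=\big(\tfrac1{\sqrt c}A_xe_3A_x^{-1},\ A_xe_1A_x^{-1}\big),\qquad x\in\mathbb{S}^3,$$ i.e. $F=\phi\circ\rho\circ\psi\circ\iota$ with $\iota(2x/\sqrt c)=x$, $\psi(x)=A_x$, and $\phi(c_1\,c_2\,c_3)=(c_3/\sqrt c,c_1)$. Lifts: $T\mathbb{S}^2(c)\subset\mathbb{R}^3\times\mathbb{R}^3$. For $(p,e)\in T\mathbb{S}^2(c)$ and $X\in T_p\mathbb{S}^2(c)$: - the vertical lift $X^v\in T_{(p,e)}T\mathbb{S}^2(c)$ is the velocity at $t=0$ of $t\mapsto(p,e+tX)$; - the horizontal lift $X^h$ is the velocity at $t=0$ of $t\mapsto(\gamma(t),V(t))$, where $\gamma$ is a curve in $\mathbb{S}^2(c)$ with $\gamma(0)=p$,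 $\dot\gamma(0)=X$, and $V$ is the Levi-Civita parallel field along $\gamma$ with $V(0)=e$. Every tangent vector of $T\mathbb{S}^2(c)$ at $(p,e)$ is uniquely $X^h+Y^v$, and $T_{(p,e)}T^1\mathbb{S}^2(c)=\{X^h+Y^v:\langle Y,e\rangle=0\}$. Generalized Cheeger–Gromoll metric: for $m\in\mathbb{R}$ and $r\ge0$, $h_{m,r}$ on $T\mathbb{S}^2(c)$ is given at $(p,e)$ by - $h_{m,r}(X^h,Y^h)=\langle X,Y\rangle$, - $h_{m,r}(X^h,Y^v)=0$, - $h_{m,r}(X^v,Y^v)=\omega^m(\langle X,Y\rangle+r\langle X,e\rangle\langle Y,e\rangle)$, where $\omega=1/(1+|e|^2)$. *)

From Stdlib Require Import Reals.
Open Scope R_scope.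

Definition R3 : Type := (R * R * R)%type.
Definition R4 : Type := (R * R * R * R)%type.

Definition dot3 (u v : R3) : R :=
  let '(a1, a2, a3) := u in let '(b1, b2, b3) := v in a1*b1 + a2*b2 + a3*b3.
Definition add3 (u v : R3) : R3 :=
  let '(a1, a2, a3) := u in let '(b1, b2, b3) := v in (a1+b1, a2+b2, a3+b3).
Definition scal3 (k : R) (u : R3) : R3 :=
  let '(a1, a2, a3) := u in (k*a1, k*a2, k*a3).
Definition norm3 (u : R3) : R := sqrt (dot3 u u).
Definition c1 (u : R3) : R := let '(a, _, _) := u in a.
Definition c2 (u : R3) : R := let '(_, a, _) := u in a.
Definition c3 (u : R3) : R := let '(_, _, a) := u in a.

Definition dot4 (u v : R4) : R :=
  let '(a1, a2, a3, a4) := u in let '(b1, b2, b3, b4) := v in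
  a1*b1 + a2*b2 + a3*b3 + a4*b4.
Definition add4 (u v : R4) : R4 :=
  let '(a1, a2, a3, a4) := u in let '(b1, b2, b3, b4) := v in
  (a1+b1, a2+b2, a3+b3, a4+b4).
Definition scal4 (k : R) (u : R4) : R4 :=
  let '(a1, a2, a3, a4) := u in (k*a1, k*a2, k*a3, k*a4).
Definition opp4 (u : R4) : R4 := scal4 (-1) u.
Definition norm4 (u : R4) : R := sqrt (dot4 u u).

Definition on_S3 (k : R) (y : R4) : Prop := norm4 y = 1 / sqrt k.

(* unit tangent bundle T^1 S^2(c) inside R^3 x R^3 *)
Definition in_T1S2 (c : R) (q : R3 * R3) : Prop :=
  let (p, v) := q in norm3 p = 1 / sqrt c /\ norm3 v = 1 /\ dot3 p v = 0.

(* coordinates of A_x e_1 A_x^{-1} and A_x e_3 A_x^{-1} (Re/Im expanded,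
   z1 = x1 + i x2, z2 = x3 + i x4) *)
Definition col1 (x : R4) : R3 :=
  let '(x1, x2, x3, x4) := x in
  (x1^2 - x2^2 - x3^2 + x4^2, 2*x1*x2 + 2*x3*x4, - (2*(x1*x3 - x2*x4))).
Definition col3 (x : R4) : R3 :=
  let '(x1, x2, x3, x4) := x in
  (2*(x1*x3 + x2*x4), 2*(x2*x3 - x1*x4), x1^2 + x2^2 - x3^2 - x4^2).

(* F(2x/sqrt c) = (A_x e3 A_x^{-1} / sqrt c, A_x e1 A_x^{-1}), i.e. x = (sqrt c/2) y.
   The formula is polynomial, hence extended to all of R^4. *)
Definition Fmap (c : R) (y : R4) : R3 * R3 :=
  let x := scal4 (sqrt c / 2) y in (scal3 (1 / sqrt c) (col3 x), col1 x).

Definition vderiv3 (f : R -> R3) (t : R) (v : R3) : Prop :=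
  derivable_pt_lim (fun s => c1 (f s)) t (c1 v) /\
  derivable_pt_lim (fun s => c2 (f s)) t (c2 v) /\
  derivable_pt_lim (fun s => c3 (f s)) t (c3 v).

(* differential dF_y(w) (in R^3 x R^3), via the polynomial extension of F *)
Definition is_dF (c : R) (y w : R4) (xi : R3 * R3) : Prop :=
  vderiv3 (fun t => fst (Fmap c (add4 y (scal4 t w)))) 0 (fst xi) /\
  vderiv3 (fun t => snd (Fmap c (add4 y (scal4 t w)))) 0 (snd xi).

Definition tang (c : R) (q v : R3) : R3 := add3 v (scal3 (- (c * dot3 v q)) q).

(* horizontal lift X^h at (p,e): velocity at 0 of (gamma, V), gamma a smooth
   curve in S^2(c) with gamma(0)=p, gamma'(0)=X, V a tangent field along gamma,
   Levi-Civita parallel (tangential part of V' vanishes), V(0)=e. *)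
Definition is_hlift (c : R) (p e X : R3) (H : R3 * R3) : Prop :=
  exists (gam V : R -> R3) (V0' : R3),
    (forall t, norm3 (gam t) = 1 / sqrt c) /\
    (forall t, exists u, vderiv3 gam t u) /\
    (forall t, dot3 (V t) (gam t) = 0) /\
    gam 0 = p /\ V 0 = e /\ vderiv3 gam 0 X /\
    (forall t, exists v, vderiv3 V t v /\ tang c (gam t) v = (0, 0, 0)) /\
    vderiv3 V 0 V0' /\ H = (X, V0').

(* h_{m,r}((p,e))(xi1, xi2) = val, with xi_i = X_i^h + Y_i^v *)
Definition cg_metric (c m r : R) (pe : R3 * R3) (xi1 xi2 : R3 * R3) (val : R) : Prop :=
  let (p, e) := pe in
  exists (X1 Y1 X2 Y2 : R3) (H1 H2 : R3 * R3),
    dot3 X1 p = 0 /\ dot3 Y1 p = 0 /\ dot3 X2 p = 0 /\ dot3 Y2 p = 0 /\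
    is_hlift c p e X1 H1 /\ is_hlift c p e X2 H2 /\
    xi1 = (fst H1, add3 (snd H1) Y1) /\ xi2 = (fst H2, add3 (snd H2) Y2) /\
    val = dot3 X1 X2 + Rpower (1 / (1 + dot3 e e)) m *
                       (dot3 Y1 Y2 + r * dot3 Y1 e * dot3 Y2 e).

(* F^*(h_{m,r}|T^1S^2(c)) = g on S^3(c/4) *)
Definition pullback_is (c m r : R) (g : R4 -> R4 -> R4 -> R) : Prop :=
  forall y w1 w2 : R4,
    on_S3 (c / 4) y -> dot4 w1 y = 0 -> dot4 w2 y = 0 ->
    exists xi1 xi2 : R3 * R3,
      is_dF c y w1 xi1 /\ is_dF c y w2 xi2 /\
      cg_metric c m r (Fmap c y) xi1 xi2 (g y w1 w2) /\
      (forall v, cg_metric c m r (Fmap c y) xi1 xi2 v -> v = g y w1 w2).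

Definition round_metric (y w1 w2 : R4) : R := dot4 w1 w2.

Definition Xf1 (x : R4) : R4 := let '(x1, x2, x3, x4) := x in (-x4, -x3, x2, x1).
Definition Xf2 (x : R4) : R4 := let '(x1, x2, x3, x4) := x in (-x3, x4, x1, -x2).
Definition Xf3 (x : R4) : R4 := let '(x1, x2, x3, x4) := x in (-x2, x1, -x4, x3).

(* Berger metric: {X1, X2, eps X3} orthonormal. *)
Definition berger (eps : R) (x w1 w2 : R4) : R :=
  dot4 w1 (Xf1 x) * dot4 w2 (Xf1 x) + dot4 w1 (Xf2 x) * dot4 w2 (Xf2 x)
  + dot4 w1 (Xf3 x) * dot4 w2 (Xf3 x) / eps^2.

Definition log2 (x : R) : R := ln x / ln 2.

(* Writing x = (sqrt c / 2) y (a unit vector), F(y) = (col3 x / sqrt c, col1 x)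
   where col1, col2, col3 are the columns of rho(A_x), quadratic in x.  The proof:
   - horizontal lifts on S^2(c) are explicit, X^h = (X, -c <e,X> p), computed
     along great circles written as rational quadratic curves; hence h_{m,r} of
     two tangent vectors (X_i, V_i) is <X1,X2> + 2^-m (<Y1,Y2> + r <Y1,e><Y2,e>)
     with vertical parts Y_i = V_i + c <e,X_i> p (cg_metric_eval);
   - polynomial identities for col1, col3 and their differentials express
     <X1,X2> and <Y1,Y2> through the frame Xf1, Xf2, Xf3 of S^3, and Y_i is
     orthogonal to e, so the pullback is (c/4)(Xf1^2 + Xf2^2) + 2^-m (c^2/4) Xf3^2
     (pullback_hopf), which is the round or the Berger metric for the stated m;
   - covering: the trace of rho(A_x)^T rho(A_x') is 4 <x,x'>^2 - 1, so the fibres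
     are {y, -y}; surjectivity lifts the base point and rotates along the fibre. *)

From Pilot Require Import Defs.
From Stdlib Require Import Reals Lra Psatz FunctionalExtensionality.
From Coquelicot Require Import Coquelicot.
(* Re-import so that the component projections c1, c2, c3 of Defs take
   precedence over the homonymous constants of the Stdlib real analysis. *)
From Pilot Require Import Defs.
Open Scope R_scope.

Ltac destruct_vectors :=
  repeat match goal with
  | v : R4 |- _ => destruct v as [[[? ?] ?] ?]
  | v : R3 |- _ => destruct v as [[? ?] ?]
  end.

Ltac vec_eq := repeat apply (f_equal2 pair).

Lemma dot3_comm (u v : R3) : dot3 u v = dot3 v u.
Proof. destruct_vectors; simpl; ring. Qed.

Lemma dot3_addl (u v w : R3) : dot3 (add3 u v) w = dot3 u w + dot3 v w.
Proof. destruct_vectors; simpl; ring. Qed.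

Lemma dot3_addr (u v w : R3) : dot3 w (add3 u v) = dot3 w u + dot3 w v.
Proof. destruct_vectors; simpl; ring. Qed.

Lemma dot3_scall a (u v : R3) : dot3 (scal3 a u) v = a * dot3 u v.
Proof. destruct_vectors; simpl; ring. Qed.

Lemma dot3_scalr a (u v : R3) : dot3 u (scal3 a v) = a * dot3 u v.
Proof. destruct_vectors; simpl; ring. Qed.

Ltac dot3_expand := repeat rewrite ?dot3_addl, ?dot3_addr, ?dot3_scall, ?dot3_scalr.

Lemma dot3_nonneg (u : R3) : 0 <= dot3 u u.
Proof. destruct_vectors; simpl; nra. Qed.

Lemma dot4_nonneg (u : R4) : 0 <= dot4 u u.
Proof. destruct_vectors; simpl; nra. Qed.

Lemma dot4_scal a (u v : R4) : dot4 (scal4 a u) (scal4 a v) = a ^ 2 * dot4 u v.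
Proof. destruct_vectors; simpl; ring. Qed.

Lemma scal3_scal3 a b (u : R3) : scal3 a (scal3 b u) = scal3 (a * b) u.
Proof. destruct_vectors; simpl; vec_eq; ring. Qed.

Lemma scal3_1 (u : R3) : scal3 1 u = u.
Proof. destruct_vectors; simpl; vec_eq; ring. Qed.

Lemma scal4_scal4 a b (u : R4) : scal4 a (scal4 b u) = scal4 (a * b) u.
Proof. destruct_vectors; simpl; vec_eq; ring. Qed.

Lemma scal4_1 (u : R4) : scal4 1 u = u.
Proof. destruct_vectors; simpl; vec_eq; ring. Qed.

Lemma scal3_quadratic a (A B D : R3) t :
  scal3 a (add3 (add3 A (scal3 t B)) (scal3 (t ^ 2) D)) =
  add3 (add3 (scal3 a A) (scal3 t (scal3 a B))) (scal3 (t ^ 2) (scal3 a D)).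
Proof. destruct_vectors; simpl; vec_eq; ring. Qed.

Lemma scal4_line a (y w : R4) t :
  scal4 a (add4 y (scal4 t w)) = add4 (scal4 a y) (scal4 t (scal4 a w)).
Proof. destruct_vectors; simpl; vec_eq; ring. Qed.

Lemma dot4_self_eq0 (v : R4) : dot4 v v = 0 -> v = (0, 0, 0, 0).
Proof.
  destruct_vectors; simpl; intros H.
  assert (r = 0) by nra. assert (r0 = 0) by nra.
  assert (r1 = 0) by nra. assert (r2 = 0) by nra. now subst.
Qed.

Lemma sqrt_eq_inv_sqrt a k : 0 <= a -> 0 < k -> sqrt a = 1 / sqrt k <-> a = 1 / k.
Proof.
  intros Ha Hk. pose proof (sqrt_sqrt k) as Ek. pose proof (sqrt_lt_R0 k Hk) as Hsk.
  split.
  - intros H. rewrite <- (sqrt_sqrt a Ha), H.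
    replace (1 / k) with (1 / (sqrt k * sqrt k)) by (rewrite Ek; lra). field; lra.
  - intros ->. unfold Rdiv. rewrite !Rmult_1_l. apply sqrt_inv.
Qed.

Lemma on_S3_iff k y : 0 < k -> on_S3 k y <-> dot4 y y = 1 / k.
Proof. intros Hk. apply sqrt_eq_inv_sqrt; auto using dot4_nonneg. Qed.

Lemma vderiv3_ext (f g : R -> R3) t v :
  (forall s, f s = g s) -> vderiv3 g t v -> vderiv3 f t v.
Proof.
  intros E. replace f with g; [easy |]. apply functional_extensionality. now symmetry.
Qed.

Lemma vderiv3_unique (f : R -> R3) t u v : vderiv3 f t u -> vderiv3 f t v -> u = v.
Proof.
  intros (F1 & F2 & F3) (G1 & G2 & G3).
  pose proof (uniqueness_limite _ _ _ _ F1 G1).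
  pose proof (uniqueness_limite _ _ _ _ F2 G2).
  pose proof (uniqueness_limite _ _ _ _ F3 G3).
  destruct_vectors; simpl in *; now subst.
Qed.

Lemma dot3_components (u v : R3) : dot3 u v = c1 u * c1 v + c2 u * c2 v + c3 u * c3 v.
Proof. now destruct_vectors. Qed.

Lemma vderiv3_dot (f g : R -> R3) t u v : vderiv3 f t u -> vderiv3 g t v ->
  derivable_pt_lim (fun s => dot3 (f s) (g s)) t (dot3 u (g t) + dot3 (f t) v).
Proof.
  intros (F1 & F2 & F3) (G1 & G2 & G3).
  rewrite !dot3_components.
  replace (fun s => dot3 (f s) (g s)) with
    (fun s => c1 (f s) * c1 (g s) + c2 (f s) * c2 (g s) + c3 (f s) * c3 (g s))
    by (apply functional_extensionality; intros; now rewrite dot3_components).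
  replace (c1 u * c1 (g t) + c2 u * c2 (g t) + c3 u * c3 (g t) +
           (c1 (f t) * c1 v + c2 (f t) * c2 v + c3 (f t) * c3 v))
    with ((c1 u * c1 (g t) + c1 (f t) * c1 v) + (c2 u * c2 (g t) + c2 (f t) * c2 v)
          + (c3 u * c3 (g t) + c3 (f t) * c3 v)) by ring.
  repeat apply derivable_pt_lim_plus; apply derivable_pt_lim_mult; assumption.
Qed.

(* The rational quadratic curves (A + t B + t^2 D) / (1 + k t^2), k >= 0:
   great circles of a round sphere and parallel fields along them are of this form. *)
Definition ratio_curve (k : R) (A B D : R3) (t : R) : R3 :=
  scal3 (/ (1 + k * t ^ 2)) (add3 (add3 A (scal3 t B)) (scal3 (t ^ 2) D)).

Definition ratio_curve_deriv (k : R) (A B D : R3) (t : R) : R3 :=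
  scal3 (/ (1 + k * t ^ 2) ^ 2)
    (add3 (scal3 (1 + k * t ^ 2) (add3 B (scal3 (2 * t) D)))
          (scal3 (- (2 * k * t)) (add3 (add3 A (scal3 t B)) (scal3 (t ^ 2) D)))).

Lemma vderiv3_ratio_curve k A B D t : 0 <= k ->
  vderiv3 (ratio_curve k A B D) t (ratio_curve_deriv k A B D t).
Proof.
  intros Hk. assert (0 < 1 + k * t ^ 2) by nra.
  destruct_vectors; split; [| split]; simpl;
    apply is_derive_Reals; auto_derive; (lra || (field; lra)).
Qed.

Lemma ratio_curve_at_0 k A B D : ratio_curve k A B D 0 = A.
Proof. unfold ratio_curve; destruct_vectors; simpl; vec_eq; field. Qed.

Lemma ratio_curve_deriv_at_0 k A B D : ratio_curve_deriv k A B D 0 = B.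
Proof. unfold ratio_curve_deriv; destruct_vectors; simpl; vec_eq; field. Qed.

Lemma vderiv3_quadratic (f : R -> R3) A B D :
  (forall t, f t = add3 (add3 A (scal3 t B)) (scal3 (t ^ 2) D)) -> vderiv3 f 0 B.
Proof.
  intros Hf. apply (vderiv3_ext _ (ratio_curve 0 A B D)).
  - intros t. rewrite Hf. unfold ratio_curve.
    replace (/ (1 + 0 * t ^ 2)) with 1 by field. now rewrite scal3_1.
  - rewrite <- (ratio_curve_deriv_at_0 0 A B D) at 2. apply vderiv3_ratio_curve; lra.
Qed.

(** Horizontal lifts on the round sphere S^2(c) *)

(* Through p in the direction X (X orthogonal to p) runs the great circle
   ((1 - k t^2) p + t X) / (1 + k t^2) with k = c |X|^2 / 4. *)
Definition circle_rate (c : R) (X : R3) : R := c * dot3 X X / 4.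

Definition great_circle (c : R) (p X : R3) : R -> R3 :=
  ratio_curve (circle_rate c X) p X (scal3 (- circle_rate c X) p).

(* The parallel transport of e along that circle. *)
Definition parallel_field (c : R) (p X e : R3) : R -> R3 :=
  ratio_curve (circle_rate c X) e (scal3 (- (c * dot3 e X)) p)
    (add3 (scal3 (circle_rate c X) e) (scal3 (- (c * dot3 e X) / 2) X)).

Lemma circle_rate_nonneg c X : 0 < c -> 0 <= circle_rate c X.
Proof. intros Hc. unfold circle_rate. pose proof (dot3_nonneg X). nra. Qed.

(* The velocity of the parallel field is a multiple of the position on the
   circle, i.e. normal to the sphere. *)
Lemma parallel_field_velocity k l (p X e : R3) t : 0 <= k ->
  ratio_curve_deriv k e (scal3 (- l) p) (add3 (scal3 k e) (scal3 (- l / 2) X)) t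
  = scal3 (- l / (1 + k * t ^ 2)) (ratio_curve k p X (scal3 (- k) p) t).
Proof.
  intros Hk. assert (0 < 1 + k * t ^ 2) by nra.
  unfold ratio_curve_deriv, ratio_curve. destruct_vectors; simpl; vec_eq; field; lra.
Qed.

Lemma tang_radial c (g : R3) a : 0 < c -> dot3 g g = 1 / c -> tang c g (scal3 a g) = (0, 0, 0).
Proof.
  intros Hc Hg. unfold tang. rewrite dot3_scall, Hg.
  destruct_vectors; simpl; vec_eq; field; lra.
Qed.

Section GreatCircle.

Variables (c : R) (p X e : R3).
Hypothesis Hc : 0 < c.
Hypothesis Hp : dot3 p p = 1 / c.
Hypothesis HXp : dot3 X p = 0.
Hypothesis Hep : dot3 e p = 0.

Lemma great_circle_on_sphere t :
  dot3 (great_circle c p X t) (great_circle c p X t) = 1 / c.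
Proof.
  pose proof (circle_rate_nonneg c X Hc). assert (0 < 1 + circle_rate c X * t ^ 2) by nra.
  unfold great_circle, ratio_curve. dot3_expand. rewrite (dot3_comm p X), Hp, HXp.
  unfold circle_rate in *. field. lra.
Qed.

Lemma parallel_field_tangent t :
  dot3 (parallel_field c p X e t) (great_circle c p X t) = 0.
Proof.
  pose proof (circle_rate_nonneg c X Hc). assert (0 < 1 + circle_rate c X * t ^ 2) by nra.
  unfold parallel_field, great_circle, ratio_curve. dot3_expand.
  rewrite (dot3_comm p X), Hp, HXp, Hep.
  unfold circle_rate in *. field. lra.
Qed.

Lemma horizontal_lift_exists : is_hlift c p e X (X, scal3 (- (c * dot3 e X)) p).
Proof.
  pose proof (circle_rate_nonneg c X Hc) as Hk.
  exists (great_circle c p X), (parallel_field c p X e), (scal3 (- (c * dot3 e X)) p).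
  split; [| split; [| split; [| split; [| split; [| split; [| split; [| split]]]]]]].
  - intros t. apply sqrt_eq_inv_sqrt; auto using dot3_nonneg, great_circle_on_sphere.
  - intros t. eexists. apply vderiv3_ratio_curve, Hk.
  - apply parallel_field_tangent.
  - apply ratio_curve_at_0.
  - apply ratio_curve_at_0.
  - rewrite <- (ratio_curve_deriv_at_0 (circle_rate c X) p X (scal3 (- circle_rate c X) p)) at 2.
    apply vderiv3_ratio_curve, Hk.
  - intros t. eexists. split; [apply vderiv3_ratio_curve, Hk |].
    rewrite parallel_field_velocity by exact Hk.
    apply tang_radial; [exact Hc | apply great_circle_on_sphere].
  - unfold parallel_field.
    rewrite <- (ratio_curve_deriv_at_0 (circle_rate c X) e (scal3 (- (c * dot3 e X)) p)
                  (add3 (scal3 (circle_rate c X) e) (scal3 (- (c * dot3 e X) / 2) X))) at 2.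
    apply vderiv3_ratio_curve, Hk.
  - reflexivity.
Qed.

End GreatCircle.

(* Conversely every horizontal lift is X^h = (X, -c <e,X> p): differentiating
   <V, gam> = 0 gives <V'(0), p> = -<e,X>, and V'(0) is normal to the sphere. *)
Lemma horizontal_lift_unique c p e X H :
  is_hlift c p e X H -> H = (X, scal3 (- (c * dot3 e X)) p).
Proof.
  intros (gam & V & V0' & _ & Hgam & Hperp & Hg0 & HV0 & HX & Hpar & HV0' & ->).
  destruct (Hpar 0) as (v & Hv & Htang).
  rewrite (vderiv3_unique _ _ _ _ Hv HV0') in Htang.
  assert (Hnormal : dot3 V0' p = - dot3 e X).
  { pose proof (vderiv3_dot _ _ _ _ _ HV0' HX) as Hd.
    assert (Hz : derivable_pt_lim (fun s => dot3 (V s) (gam s)) 0 0).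
    { apply (derivable_pt_lim_ext (fct_cte 0)).
      - intros s. now rewrite Hperp.
      - apply derivable_pt_lim_const. }
    pose proof (uniqueness_limite _ _ _ _ Hd Hz). rewrite Hg0, HV0 in *. lra. }
  rewrite Hg0 in Htang. unfold tang in Htang. rewrite Hnormal in Htang.
  f_equal. destruct_vectors; simpl in *. injection Htang; intros.
  vec_eq; lra.
Qed.

(** The generalized Cheeger-Gromoll metric on decomposed tangent vectors *)

(* A tangent vector (X, V) of TS^2(c) at (p, e) splits as X^h + Y^v with
   X^h = (X, -c <e,X> p); this is its vertical part Y. *)
Definition vertical_part (c : R) (p e X V : R3) : R3 := add3 V (scal3 (c * dot3 e X) p).

Lemma horizontal_plus_vertical c p e X V :
  add3 (scal3 (- (c * dot3 e X)) p) (vertical_part c p e X V) = V.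
Proof. unfold vertical_part; destruct_vectors; simpl; vec_eq; ring. Qed.

Lemma vertical_part_of_sum c p e X Y :
  vertical_part c p e X (add3 (scal3 (- (c * dot3 e X)) p) Y) = Y.
Proof. unfold vertical_part; destruct_vectors; simpl; vec_eq; ring. Qed.

(* (X, V) is tangent to TS^2(c) when X is tangent to the sphere and
   <V,p> + <e,X> = 0 (the derivative of <e,p> = 0); then Y is tangent too. *)
Lemma vertical_part_tangent c p e X V : 0 < c -> dot3 p p = 1 / c ->
  dot3 V p + dot3 e X = 0 -> dot3 (vertical_part c p e X V) p = 0.
Proof.
  intros Hc Hp HV. unfold vertical_part. dot3_expand. rewrite Hp.
  field_simplify; [lra | lra].
Qed.

Lemma cg_metric_eval c m r p e X1 V1 X2 V2 v :
  0 < c -> dot3 p p = 1 / c -> dot3 e p = 0 ->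
  dot3 X1 p = 0 -> dot3 X2 p = 0 ->
  dot3 V1 p + dot3 e X1 = 0 -> dot3 V2 p + dot3 e X2 = 0 ->
  let Y1 := vertical_part c p e X1 V1 in
  let Y2 := vertical_part c p e X2 V2 in
  cg_metric c m r (p, e) (X1, V1) (X2, V2) v <->
  v = dot3 X1 X2 + Rpower (1 / (1 + dot3 e e)) m * (dot3 Y1 Y2 + r * dot3 Y1 e * dot3 Y2 e).
Proof.
  intros Hc Hp Hep HX1 HX2 HV1 HV2 Y1 Y2. split.
  - intros (X1' & Z1 & X2' & Z2 & H1 & H2 & _ & _ & _ & _ & L1 & L2 & E1 & E2 & ->).
    apply horizontal_lift_unique in L1, L2. subst H1 H2. simpl in E1, E2.
    injection E1 as <- ->. injection E2 as <- ->.
    subst Y1 Y2. now rewrite !vertical_part_of_sum.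
  - intros ->.
    exists X1, Y1, X2, Y2,
      (X1, scal3 (- (c * dot3 e X1)) p), (X2, scal3 (- (c * dot3 e X2)) p).
    subst Y1 Y2.
    repeat split; auto using vertical_part_tangent, horizontal_lift_exists;
      simpl; now rewrite horizontal_plus_vertical.
Qed.

(** Polynomial identities for the columns of rho(A_x) *)

(* The middle column A_x e_2 A_x^{-1}; col1, col2, col3 are the columns of
   rho(A_x), an orthogonal frame scaled by |x|^2. *)
Definition col2 (x : R4) : R3 :=
  let '(x1, x2, x3, x4) := x in
  (2*x3*x4 - 2*x1*x2, x1^2 - x2^2 + x3^2 - x4^2, 2*(x1*x4 + x2*x3)).

Definition col1_diff (x u : R4) : R3 :=
  let '(x1, x2, x3, x4) := x in let '(u1, u2, u3, u4) := u in
  (2*(x1*u1 - x2*u2 - x3*u3 + x4*u4), 2*(x1*u2 + u1*x2 + x3*u4 + u3*x4),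
   -(2*(x1*u3 + u1*x3 - x2*u4 - u2*x4))).
Definition col3_diff (x u : R4) : R3 :=
  let '(x1, x2, x3, x4) := x in let '(u1, u2, u3, u4) := u in
  (2*(x1*u3 + u1*x3 + x2*u4 + u2*x4), 2*(x2*u3 + u2*x3 - x1*u4 - u1*x4),
   2*(x1*u1 + x2*u2 - x3*u3 - x4*u4)).

(* <u, f x> <v, f x>, the product of the f(x)-components of u and v; for
   f = Xf1, Xf2, Xf3, radial these are the coordinates in the frame of R^4 at x. *)
Definition frame_prod (f : R4 -> R4) (x u v : R4) : R := dot4 u (f x) * dot4 v (f x).

Definition radial (x : R4) : R4 := x.

Lemma col1_line x u t :
  col1 (add4 x (scal4 t u)) = add3 (add3 (col1 x) (scal3 t (col1_diff x u))) (scal3 (t ^ 2) (col1 u)).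
Proof. destruct_vectors; simpl; vec_eq; ring. Qed.

Lemma col3_line x u t :
  col3 (add4 x (scal4 t u)) = add3 (add3 (col3 x) (scal3 t (col3_diff x u))) (scal3 (t ^ 2) (col3 u)).
Proof. destruct_vectors; simpl; vec_eq; ring. Qed.

Lemma col1_col1 x : dot3 (col1 x) (col1 x) = dot4 x x ^ 2.
Proof. destruct_vectors; simpl; ring. Qed.

Lemma col3_col3 x : dot3 (col3 x) (col3 x) = dot4 x x ^ 2.
Proof. destruct_vectors; simpl; ring. Qed.

Lemma col1_col3 x : dot3 (col1 x) (col3 x) = 0.
Proof. destruct_vectors; simpl; ring. Qed.

Definition cross (a b : R3) : R3 :=
  let '(a1, a2, a3) := a in let '(b1, b2, b3) := b in
  (a2*b3 - a3*b2, a3*b1 - a1*b3, a1*b2 - a2*b1).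

Lemma cross_col3_col1 x : cross (col3 x) (col1 x) = scal3 (dot4 x x) (col2 x).
Proof. destruct_vectors; simpl; vec_eq; ring. Qed.

Lemma frame_expansion x v : scal3 (dot4 x x ^ 2) v =
  add3 (add3 (scal3 (dot3 v (col1 x)) (col1 x)) (scal3 (dot3 v (col2 x)) (col2 x)))
       (scal3 (dot3 v (col3 x)) (col3 x)).
Proof. destruct_vectors; simpl; vec_eq; ring. Qed.

Lemma frame_parseval x v : dot3 v v * dot4 x x ^ 2 =
  dot3 v (col1 x) ^ 2 + dot3 v (col2 x) ^ 2 + dot3 v (col3 x) ^ 2.
Proof. destruct_vectors; simpl; ring. Qed.

(* Trace of rho(A_x)^T rho(A_y): it detects whether y = +-x. *)
Lemma columns_trace x y :
  dot3 (col1 x) (col1 y) + dot3 (col2 x) (col2 y) + dot3 (col3 x) (col3 y)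
  = 4 * dot4 x y ^ 2 - dot4 x x * dot4 y y.
Proof. destruct_vectors; simpl; ring. Qed.

Lemma col3_diff_col3 x u : dot3 (col3_diff x u) (col3 x) = 2 * dot4 x x * dot4 u x.
Proof. destruct_vectors; simpl; ring. Qed.

Lemma col1_diff_col1 x u : dot3 (col1_diff x u) (col1 x) = 2 * dot4 x x * dot4 u x.
Proof. destruct_vectors; simpl; ring. Qed.

Lemma col_diff_cross x u : dot3 (col1_diff x u) (col3 x) + dot3 (col1 x) (col3_diff x u) = 0.
Proof. destruct_vectors; simpl; ring. Qed.

Lemma col1_col3_diff x u : dot3 (col1 x) (col3_diff x u) = 2 * dot4 x x * dot4 u (Xf2 x).
Proof. destruct_vectors; simpl; ring. Qed.

(* Gram matrices of the differentials: col3 is constant along Xf3 (the Hopf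
   fibres), col1 along Xf1. *)
Lemma col3_diff_gram x u v : dot3 (col3_diff x u) (col3_diff x v) =
  4 * (frame_prod Xf1 x u v + frame_prod Xf2 x u v + frame_prod radial x u v).
Proof. unfold frame_prod; destruct_vectors; simpl; ring. Qed.

Lemma col1_diff_gram x u v : dot3 (col1_diff x u) (col1_diff x v) =
  4 * (frame_prod Xf2 x u v + frame_prod Xf3 x u v + frame_prod radial x u v).
Proof. unfold frame_prod; destruct_vectors; simpl; ring. Qed.

Lemma frame4_parseval x u v :
  frame_prod Xf1 x u v + frame_prod Xf2 x u v + frame_prod Xf3 x u v + frame_prod radial x u v
  = dot4 x x * dot4 u v.
Proof. unfold frame_prod; destruct_vectors; simpl; ring. Qed.

Lemma frame_prod_scal f s x u v : (forall z, f (scal4 s z) = scal4 s (f z)) ->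
  frame_prod f (scal4 s x) (scal4 s u) (scal4 s v) = s ^ 4 * frame_prod f x u v.
Proof. intros Hf. unfold frame_prod. rewrite Hf, !dot4_scal. ring. Qed.

Lemma Xf1_scal s z : Xf1 (scal4 s z) = scal4 s (Xf1 z).
Proof. destruct_vectors; simpl; vec_eq; ring. Qed.
Lemma Xf2_scal s z : Xf2 (scal4 s z) = scal4 s (Xf2 z).
Proof. destruct_vectors; simpl; vec_eq; ring. Qed.
Lemma Xf3_scal s z : Xf3 (scal4 s z) = scal4 s (Xf3 z).
Proof. destruct_vectors; simpl; vec_eq; ring. Qed.

(* The vertical part of dF at a unit vector x (see hopf_vertical_part below). *)
Definition hopf_vertical (x u : R4) : R3 :=
  add3 (col1_diff x u) (scal3 (dot3 (col1 x) (col3_diff x u)) (col3 x)).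

Lemma hopf_vertical_gram x u v : dot4 x x = 1 ->
  dot3 (hopf_vertical x u) (hopf_vertical x v) =
  4 * (frame_prod Xf3 x u v + frame_prod radial x u v).
Proof.
  intros Hx. unfold hopf_vertical. dot3_expand.
  rewrite col1_diff_gram, col3_col3, Hx, (dot3_comm (col3 x) (col1_diff x v)).
  pose proof (col_diff_cross x u). pose proof (col_diff_cross x v).
  rewrite !col1_col3_diff, Hx in *. unfold frame_prod. nra.
Qed.

Lemma hopf_vertical_fibre x u : dot4 x x = 1 -> dot4 u x = 0 ->
  dot3 (hopf_vertical x u) (col1 x) = 0.
Proof.
  intros Hx Hu. unfold hopf_vertical. dot3_expand.
  rewrite col1_diff_col1, (dot3_comm (col3 x)), col1_col3, Hu. ring.
Qed.

Definition hopf_point (c : R) (y : R4) : R4 := scal4 (sqrt c / 2) y.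
Definition hopf_base (c : R) (x : R4) : R3 := scal3 (1 / sqrt c) (col3 x).

Lemma Fmap_hopf c y : Fmap c y = (hopf_base c (hopf_point c y), col1 (hopf_point c y)).
Proof. reflexivity. Qed.

Lemma hopf_point_unit c y : 0 < c -> on_S3 (c / 4) y ->
  dot4 (hopf_point c y) (hopf_point c y) = 1.
Proof.
  intros Hc Hy. apply on_S3_iff in Hy; [| lra].
  unfold hopf_point. rewrite dot4_scal, Hy.
  replace ((sqrt c / 2) ^ 2) with (sqrt c * sqrt c / 4) by field.
  rewrite sqrt_sqrt by lra. field. lra.
Qed.

Lemma hopf_point_tangent c y w : dot4 w y = 0 -> dot4 (hopf_point c w) (hopf_point c y) = 0.
Proof. intros H. unfold hopf_point. rewrite dot4_scal, H. ring. Qed.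

Lemma hopf_frame c x : 0 < c -> dot4 x x = 1 ->
  dot3 (hopf_base c x) (hopf_base c x) = 1 / c /\
  dot3 (col1 x) (hopf_base c x) = 0 /\ dot3 (col1 x) (col1 x) = 1.
Proof.
  intros Hc Hx. unfold hopf_base. rewrite !dot3_scalr, !dot3_scall, col3_col3, col1_col3, col1_col1, Hx.
  pose proof (sqrt_sqrt c) as Es. pose proof (sqrt_lt_R0 c Hc).
  repeat split; [| ring | ring].
  replace (1 / c) with (1 / (sqrt c * sqrt c)) by (rewrite Es; lra). field; lra.
Qed.

Definition hopf_diff (c : R) (x u : R4) : R3 * R3 :=
  (scal3 (1 / sqrt c) (col3_diff x u), col1_diff x u).

Lemma is_dF_hopf c y w : is_dF c y w (hopf_diff c (hopf_point c y) (hopf_point c w)).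
Proof.
  split; simpl.
  - apply (vderiv3_quadratic _ (hopf_base c (hopf_point c y)) _
             (scal3 (1 / sqrt c) (col3 (hopf_point c w)))).
    intros t. unfold Fmap; fold (hopf_point c (add4 y (scal4 t w))). unfold hopf_point at 1.
    rewrite scal4_line, col3_line, scal3_quadratic. reflexivity.
  - apply (vderiv3_quadratic _ (col1 (hopf_point c y)) _ (col1 (hopf_point c w))).
    intros t. unfold Fmap. rewrite scal4_line. apply col1_line.
Qed.

Section HopfDifferential.

Variables (c : R) (x : R4).
Hypothesis Hc : 0 < c.
Hypothesis Hx : dot4 x x = 1.

Lemma hopf_diff_tangent u : dot4 u x = 0 ->
  dot3 (fst (hopf_diff c x u)) (hopf_base c x) = 0 /\
  dot3 (snd (hopf_diff c x u)) (hopf_base c x) + dot3 (col1 x) (fst (hopf_diff c x u)) = 0.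
Proof.
  intros Hu. unfold hopf_diff, hopf_base; simpl.
  rewrite !dot3_scall, !dot3_scalr, col3_diff_col3, Hu. split; [ring |].
  pose proof (col_diff_cross x u). nra.
Qed.

Lemma hopf_vertical_part u :
  vertical_part c (hopf_base c x) (col1 x) (fst (hopf_diff c x u)) (snd (hopf_diff c x u))
  = hopf_vertical x u.
Proof.
  unfold vertical_part, hopf_diff, hopf_base, hopf_vertical; simpl.
  rewrite dot3_scalr, scal3_scal3.
  replace (c * (1 / sqrt c * dot3 (col1 x) (col3_diff x u)) * (1 / sqrt c))
    with (dot3 (col1 x) (col3_diff x u) * (c / (sqrt c * sqrt c))) by (field; apply Rgt_not_eq, sqrt_lt_R0; lra).
  rewrite sqrt_sqrt by lra. replace (c / c) with 1 by (field; lra).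
  now rewrite Rmult_1_r.
Qed.

Lemma hopf_diff_metric m r u1 u2 v : dot4 u1 x = 0 -> dot4 u2 x = 0 ->
  cg_metric c m r (hopf_base c x, col1 x) (hopf_diff c x u1) (hopf_diff c x u2) v <->
  v = 4 / c * (frame_prod Xf1 x u1 u2 + frame_prod Xf2 x u1 u2)
      + Rpower (1 / 2) m * (4 * frame_prod Xf3 x u1 u2).
Proof.
  intros H1 H2.
  destruct (hopf_frame c x Hc Hx) as (Hp & Hep & Hee).
  destruct (hopf_diff_tangent u1 H1) as (HX1 & HV1).
  destruct (hopf_diff_tangent u2 H2) as (HX2 & HV2).
  pose proof (hopf_vertical_part u1) as HY1. pose proof (hopf_vertical_part u2) as HY2.
  unfold hopf_diff in *; cbn [fst snd] in *.
  rewrite (cg_metric_eval _ _ _ _ _ _ _ _ _ v Hc Hp Hep HX1 HX2 HV1 HV2), HY1, HY2.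
  rewrite !hopf_vertical_fibre, hopf_vertical_gram, Hee by assumption.
  rewrite dot3_scall, dot3_scalr, col3_diff_gram.
  replace (frame_prod radial x u1 u2) with 0 by (unfold frame_prod, radial; rewrite H1; ring).
  replace (1 + 1) with 2 by ring.
  pose proof (sqrt_sqrt c (Rlt_le _ _ Hc)) as Es. pose proof (sqrt_lt_R0 c Hc).
  replace (4 / c) with (4 / (sqrt c * sqrt c)) by now rewrite Es.
  split; intros ->; field; lra.
Qed.

End HopfDifferential.

(** The pullback of h_{m,r} by F *)

(* In the coordinates of S^3(c/4), F^* h_{m,r} equals
   (c/4) (<.,X1>^2 + <.,X2>^2) + rho (c^2/4) <.,X3>^2 with rho = 2^-m. *)
Definition hopf_pullback (c rho : R) (y w1 w2 : R4) : R :=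
  c / 4 * (frame_prod Xf1 y w1 w2 + frame_prod Xf2 y w1 w2)
  + rho * (c ^ 2 / 4) * frame_prod Xf3 y w1 w2.

Lemma pullback_hopf c m r (g : R4 -> R4 -> R4 -> R) : 0 < c ->
  (forall y w1 w2, on_S3 (c / 4) y -> dot4 w1 y = 0 -> dot4 w2 y = 0 ->
     g y w1 w2 = hopf_pullback c (Rpower (1 / 2) m) y w1 w2) ->
  pullback_is c m r g.
Proof.
  intros Hc Hg y w1 w2 Hy H1 H2.
  pose proof (hopf_point_unit c y Hc Hy) as Hx.
  pose proof (hopf_point_tangent c y w1 H1) as Hu1.
  pose proof (hopf_point_tangent c y w2 H2) as Hu2.
  (* rescaling by sqrt c / 2 multiplies the frame products by c^2 / 16 *)
  assert (Hval : g y w1 w2 =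
    4 / c * (frame_prod Xf1 (hopf_point c y) (hopf_point c w1) (hopf_point c w2)
             + frame_prod Xf2 (hopf_point c y) (hopf_point c w1) (hopf_point c w2))
    + Rpower (1 / 2) m * (4 * frame_prod Xf3 (hopf_point c y) (hopf_point c w1) (hopf_point c w2))).
  { rewrite Hg by assumption. unfold hopf_point, hopf_pullback.
    rewrite !frame_prod_scal by auto using Xf1_scal, Xf2_scal, Xf3_scal.
    replace ((sqrt c / 2) ^ 4) with ((sqrt c * sqrt c) ^ 2 / 16) by field.
    rewrite sqrt_sqrt by lra. field. lra. }
  exists (hopf_diff c (hopf_point c y) (hopf_point c w1)),
         (hopf_diff c (hopf_point c y) (hopf_point c w2)).
  rewrite Fmap_hopf, Hval.
  split; [apply is_dF_hopf | split; [apply is_dF_hopf | split]].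
  - now apply hopf_diff_metric.
  - intros v Hv. now apply hopf_diff_metric in Hv.
Qed.

Lemma hopf_pullback_round c y w1 w2 : 0 < c -> dot4 y y = 4 / c -> dot4 w1 y = 0 ->
  hopf_pullback c (1 / c) y w1 w2 = round_metric y w1 w2.
Proof.
  intros Hc Hy H1. pose proof (frame4_parseval y w1 w2) as Hparseval.
  unfold hopf_pullback, round_metric. unfold frame_prod at 4, radial in Hparseval.
  rewrite Hy, H1 in Hparseval.
  replace (dot4 w1 w2) with (c / 4 * (4 / c * dot4 w1 w2)) by (field; lra).
  rewrite <- Hparseval. field. lra.
Qed.

Lemma hopf_pullback_berger eps y w1 w2 : 0 < eps ->
  hopf_pullback 4 (1 / (4 * eps ^ 2)) y w1 w2 = berger eps y w1 w2.
Proof. intros He. unfold hopf_pullback, berger, frame_prod. field. lra. Qed.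

Lemma ln2_pos : 0 < ln 2.
Proof. rewrite <- ln_1. apply ln_increasing; lra. Qed.

Lemma Rpower_half_log2 a : 0 < a -> Rpower (1 / 2) (log2 a) = 1 / a.
Proof.
  intros Ha. pose proof ln2_pos. unfold Rpower, log2.
  rewrite ln_div, ln_1 by lra.
  replace (ln a / ln 2 * (0 - ln 2)) with (- ln a) by (field; lra).
  rewrite exp_Ropp, exp_ln by exact Ha. field. lra.
Qed.

Lemma Rpower_half_berger eps : 0 < eps ->
  Rpower (1 / 2) (log2 (eps ^ 2) + 2) = 1 / (4 * eps ^ 2).
Proof.
  intros He. rewrite Rpower_plus, Rpower_half_log2 by (apply pow_lt; exact He).
  replace (Rpower (1 / 2) 2) with ((1 / 2) ^ 2).
  - field. lra.
  - rewrite <- Rpower_pow by lra. f_equal.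
Qed.

(** F is a double covering of T^1 S^2(c) *)

Lemma Fmap_in_T1S2 c y : 0 < c -> on_S3 (c / 4) y -> in_T1S2 c (Fmap c y).
Proof.
  intros Hc Hy. rewrite Fmap_hopf.
  destruct (hopf_frame c _ Hc (hopf_point_unit c y Hc Hy)) as (Hp & Hep & Hee).
  split; [| split].
  - apply sqrt_eq_inv_sqrt; auto using dot3_nonneg.
  - unfold norm3. now rewrite Hee, sqrt_1.
  - now rewrite dot3_comm.
Qed.

Lemma Fmap_even c y : Fmap c (opp4 y) = Fmap c y.
Proof. unfold Fmap, opp4. destruct_vectors; simpl; vec_eq; ring. Qed.

Lemma unit_vectors_parallel x y : dot4 x x = 1 -> dot4 y y = 1 -> dot4 x y ^ 2 = 1 ->
  y = x \/ y = opp4 x.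
Proof.
  intros Hx Hy Hxy.
  assert (Hdist : forall s, dot4 (add4 y (scal4 s x)) (add4 y (scal4 s x))
                            = dot4 y y + 2 * s * dot4 x y + s ^ 2 * dot4 x x)
    by (intros; destruct_vectors; simpl; ring).
  destruct (Rmult_integral (dot4 x y - 1) (dot4 x y + 1)) as [Hd | Hd]; [nra | left | right].
  - assert (E : add4 y (scal4 (-1) x) = (0, 0, 0, 0))
      by (apply dot4_self_eq0; rewrite Hdist; nra).
    destruct_vectors; simpl in E. injection E; intros. vec_eq; lra.
  - assert (E : add4 y (scal4 1 x) = (0, 0, 0, 0))
      by (apply dot4_self_eq0; rewrite Hdist; nra).
    unfold opp4. destruct_vectors; simpl in *. injection E; intros. vec_eq; lra.
Qed.

Lemma hopf_point_cancel c y : 0 < c -> scal4 (2 / sqrt c) (hopf_point c y) = y.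
Proof.
  intros Hc. pose proof (sqrt_lt_R0 c Hc). unfold hopf_point.
  rewrite scal4_scal4. replace (2 / sqrt c * (sqrt c / 2)) with 1 by (field; lra).
  apply scal4_1.
Qed.

(* The fibres of F are the pairs {y, -y}: F(y) determines the rotation
   rho(A_x), whose trace against rho(A_x') is 4 <x,x'>^2 - 1. *)
Lemma Fmap_fibre c y y' : 0 < c -> on_S3 (c / 4) y -> on_S3 (c / 4) y' ->
  Fmap c y = Fmap c y' -> y' = y \/ y' = opp4 y.
Proof.
  intros Hc Hy Hy' E. rewrite !Fmap_hopf in E. injection E as E3 E1.
  pose proof (hopf_point_unit c y Hc Hy) as Hx.
  pose proof (hopf_point_unit c y' Hc Hy') as Hx'.
  pose proof (hopf_point_cancel c y Hc) as Cy. pose proof (hopf_point_cancel c y' Hc) as Cy'.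
  set (x := hopf_point c y) in *. set (x' := hopf_point c y') in *.
  assert (C3 : col3 x = col3 x').
  { unfold hopf_base in E3. apply (f_equal (scal3 (sqrt c))) in E3.
    pose proof (sqrt_lt_R0 c Hc). rewrite !scal3_scal3 in E3.
    replace (sqrt c * (1 / sqrt c)) with 1 in E3 by (field; lra). now rewrite !scal3_1 in E3. }
  assert (C2 : col2 x = col2 x').
  { pose proof (cross_col3_col1 x) as K. pose proof (cross_col3_col1 x') as K'.
    rewrite Hx, scal3_1 in K. rewrite Hx', scal3_1 in K'. now rewrite <- K, <- K', C3, E1. }
  assert (Hxx' : dot4 x x' ^ 2 = 1).
  { pose proof (columns_trace x x') as T. pose proof (columns_trace x x) as T0.
    rewrite <- E1, <- C2, <- C3, T0, Hx, Hx' in T. lra. }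
  destruct (unit_vectors_parallel x x' Hx Hx' Hxx') as [Ex | Ex]; [left | right].
  - now rewrite <- Cy', Ex, Cy.
  - rewrite <- Cy', Ex, <- Cy. unfold opp4. rewrite !scal4_scal4. f_equal. ring.
Qed.

Lemma hopf_section (u : R3) : dot3 u u = 1 -> exists x, dot4 x x = 1 /\ col3 x = u.
Proof.
  destruct u as [[u1 u2] u3]; simpl; intros Hu.
  destruct (Rlt_or_le (-1) u3) as [Hl | Hl].
  - set (a := sqrt ((1 + u3) / 2)).
    assert (Ha : a * a = (1 + u3) / 2) by (apply sqrt_sqrt; lra).
    assert (Hap : 0 < a) by (apply sqrt_lt_R0; lra).
    assert (Hsq : u1 * u1 + u2 * u2 = 4 * (a * a) * (1 - a * a)) by (rewrite Ha; nra).
    exists (a, 0, u1 / (2 * a), - u2 / (2 * a)). simpl. split.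
    + transitivity (a * a + (u1 * u1 + u2 * u2) / (4 * (a * a))); [field; lra |].
      rewrite Hsq. field. lra.
    + vec_eq; [field; lra | field; lra |].
      transitivity (a * a - (u1 * u1 + u2 * u2) / (4 * (a * a))); [field; lra |].
      rewrite Hsq. field_simplify; lra.
  - assert (u3 = -1) by nra. assert (u1 = 0) by nra. assert (u2 = 0) by nra. subst.
    exists (0, 0, 1, 0). simpl. split; [ring | vec_eq; ring].
Qed.

Lemma half_angle a b : a ^ 2 + b ^ 2 = 1 ->
  exists C S, C ^ 2 + S ^ 2 = 1 /\ C ^ 2 - S ^ 2 = a /\ 2 * C * S = b.
Proof.
  intros H. destruct (Rlt_or_le 0 (1 + a)) as [Hl | Hl].
  - set (C := sqrt ((1 + a) / 2)).
    assert (HC : C * C = (1 + a) / 2) by (apply sqrt_sqrt; lra).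
    assert (HCp : 0 < C) by (apply sqrt_lt_R0; lra).
    exists C, (b / (2 * C)).
    assert (Hb : (b / (2 * C)) ^ 2 = (1 - a) / 2).
    { replace ((b / (2 * C)) ^ 2) with (b * b / (4 * (C * C))) by (field; lra).
      rewrite HC. replace (b * b) with ((1 - a) * (1 + a)) by nra. field. lra. }
    assert (HC2 : C ^ 2 = (1 + a) / 2) by (rewrite <- HC; ring).
    rewrite Hb, HC2. repeat split; [lra | lra | field; lra].
  - assert (a = -1) by nra. assert (b = 0) by nra. subst.
    exists 0, 1. repeat split; ring.
Qed.

(* The flow of Xf3 along the Hopf fibres: it fixes col3 and turns col1 in the
   plane (col1, col2) by the double angle. *)
Definition fibre_rotation (C S : R) (x : R4) : R4 := add4 (scal4 C x) (scal4 S (Xf3 x)).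

Lemma col3_fibre_rotation C S x : col3 (fibre_rotation C S x) = scal3 (C ^ 2 + S ^ 2) (col3 x).
Proof. destruct_vectors; simpl; vec_eq; ring. Qed.

Lemma col1_fibre_rotation C S x : col1 (fibre_rotation C S x) =
  add3 (scal3 (C ^ 2 - S ^ 2) (col1 x)) (scal3 (2 * C * S) (col2 x)).
Proof. destruct_vectors; simpl; vec_eq; ring. Qed.

Lemma norm_fibre_rotation C S x :
  dot4 (fibre_rotation C S x) (fibre_rotation C S x) = (C ^ 2 + S ^ 2) * dot4 x x.
Proof. destruct_vectors; simpl; ring. Qed.

(* F is onto: lift the base point by hopf_section, then rotate along the fibre
   until col1 reaches the prescribed unit tangent vector. *)
Lemma Fmap_onto c q : 0 < c -> in_T1S2 c q -> exists y, on_S3 (c / 4) y /\ Fmap c y = q.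
Proof.
  intros Hc. destruct q as [p v]. intros (Hp & Hv & Hpv).
  pose proof (sqrt_lt_R0 c Hc) as Hs. pose proof (sqrt_sqrt c (Rlt_le _ _ Hc)) as Es.
  unfold norm3 in Hp, Hv.
  apply (sqrt_eq_inv_sqrt _ _ (dot3_nonneg p) Hc) in Hp.
  assert (Hv1 : dot3 v v = 1).
  { rewrite <- sqrt_1 in Hv. apply sqrt_inj in Hv; auto using dot3_nonneg; lra. }
  destruct (hopf_section (scal3 (sqrt c) p)) as (x0 & Hx0 & C3).
  { rewrite dot3_scall, dot3_scalr, Hp, <- Rmult_assoc, Es. field. lra. }
  set (a := dot3 v (col1 x0)). set (b := dot3 v (col2 x0)).
  assert (Hv3 : dot3 v (col3 x0) = 0) by (rewrite C3, dot3_scalr, dot3_comm, Hpv; ring).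
  assert (Hab : a ^ 2 + b ^ 2 = 1).
  { pose proof (frame_parseval x0 v) as P. rewrite Hv3, Hx0, Hv1 in P. fold a b in P. lra. }
  destruct (half_angle a b Hab) as (C & S & HCS & Hcos & Hsin).
  exists (scal4 (2 / sqrt c) (fibre_rotation C S x0)). split.
  - apply on_S3_iff; [lra |]. rewrite dot4_scal, norm_fibre_rotation, HCS, Hx0.
    replace ((2 / sqrt c) ^ 2) with (4 / (sqrt c * sqrt c)) by (field; lra).
    rewrite Es. field. lra.
  - rewrite Fmap_hopf. unfold hopf_point, hopf_base. rewrite scal4_scal4.
    replace (sqrt c / 2 * (2 / sqrt c)) with 1 by (field; lra). rewrite scal4_1.
    rewrite col3_fibre_rotation, col1_fibre_rotation, HCS, Hcos, Hsin, scal3_1, C3, scal3_scal3.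
    replace (1 / sqrt c * sqrt c) with 1 by (field; lra). rewrite scal3_1. f_equal.
    (* v is recovered from its coordinates in the frame of x0 *)
    pose proof (frame_expansion x0 v) as Ev. rewrite Hx0, Hv3 in Ev. fold a b in Ev.
    replace (1 ^ 2) with 1 in Ev by ring. rewrite scal3_1 in Ev. rewrite Ev.
    destruct (col1 x0) as [[? ?] ?], (col2 x0) as [[? ?] ?], (col3 x0) as [[? ?] ?].
    simpl; vec_eq; ring.
Qed.

Theorem theorem1 :
  (forall c : R, 0 < c ->
     (forall y, on_S3 (c / 4) y -> in_T1S2 c (Fmap c y)) /\
     (forall q, in_T1S2 c q -> exists y, on_S3 (c / 4) y /\ Fmap c y = q) /\
     (forall y, on_S3 (c / 4) y -> Fmap c (opp4 y) = Fmap c y) /\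
     (forall y y', on_S3 (c / 4) y -> on_S3 (c / 4) y' ->
        Fmap c y = Fmap c y' -> y' = y \/ y' = opp4 y) /\
     (forall r, 0 <= r -> pullback_is c (log2 c) r round_metric)) /\
  (forall eps r : R, 0 < eps -> 0 <= r ->
     pullback_is 4 (log2 (eps ^ 2) + 2) r (berger eps)).
Proof.
  split.
  - intros c Hc. split; [| split; [| split; [| split]]].
    + intros y. now apply Fmap_in_T1S2.
    + intros q. now apply Fmap_onto.
    + intros y _. apply Fmap_even.
    + intros y y'. now apply Fmap_fibre.
    + (* round metric: 2^-m = 1/c *)
      intros r _. apply pullback_hopf; [exact Hc |].
      intros y w1 w2 Hy H1 _. rewrite Rpower_half_log2 by exact Hc.
      apply on_S3_iff in Hy; [| lra].
      symmetry. apply hopf_pullback_round; [exact Hc | rewrite Hy; field; lra | exact H1].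
  - (* Berger metric: c = 4 and 2^-m = 1 / (4 eps^2) *)
    intros eps r Heps _. apply pullback_hopf; [lra |].
    intros y w1 w2 _ _ _. rewrite Rpower_half_berger by exact Heps.
    symmetry. now apply hopf_pullback_berger.
Qed.
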